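(* Let $n\ge2$ and let $X_1,\dots,X_n$ be nonnegative (possibly dependent) random variables with order statistics $X_{1:n}\le\cdots\le X_{n:n}$, and suppose one of the following holds: (A) the distribution function of $X_{n:n}$ has infinite upper endpoint, $X_{n:n}\in\mathrm{GMDA}(h)$ for some positive $h$, and $$\lim_{x\to\infty}\frac{\mathbb{P}(|X_i|>t h(x),X_j>x)}{\mathbb{P}(X_{n:n}>x)}=0\ \text{for all }1\le i\ne j\le n,\ t>0,\qquad(\ast)$$ $$\lim_{x\to\infty}\frac{\mathbb{P}(X_i>Lh(x),X_j>Lh(x))}{\mathbb{P}(X_{n:n}>x)}=0\ \text{for all }1\le i<j\le n\text{ and some }L>0;\qquad(\ast\ast)$$ (B) $X_{n:n}\in\mathcal{L}$ and there exists $h\in\mathcal{H}_{X_{n:n}}$ such that $(\ast)$ and $(\ast\ast)$ hold; (C) $X_{n:n}\in\mathcal{L}\cap\mathcal{D}$ and there exists a dominatedly varying $h\in\mathcal{H}_{X_{n:n}}$ such that $(\ast)$ holds. Then for any $0<a\le b<\infty$ and $0\le d<\infty$, $$\mathbb{P}\Big(\sum_{i=0}^{n-1}c_iX_{n-i:n}>x\Big)\sim\mathbb{P}(c_0X_{n:n}>x)\sim\sum_{i=1}^n\mathbb{P}(c_0X_i>x),\qquad x\to\infty,$$ uniformly for $(c_0,c_1,\dots,c_{n-1})\in[a,b]\times[-d,d]^{n-1}$.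
   Context: Random variables are assumed not degenerate at $0$ (not concentrated on $(-\infty,0]$). For a distribution function $F$, $\overline{F}=1-F$, $x_F=\sup\{x:F(x)<1\}$. $F\in\mathrm{GMDA}(h)$ means $\lim_{x\to x_F}\overline{F}(x+yh(x))/\overline{F}(x)=e^{-y}$ for all $y\in\mathbb{R}$. $F\in\mathcal{L}$ means $\overline{F}(x)>0$ for all $x\ge0$ and $\overline{F}(x+y)\sim\overline{F}(x)$ for all $y\in\mathbb{R}$. $F\in\mathcal{D}$ means $\overline{F}$ is dominatedly varying; a positive $g$ is dominatedly varying if $0<\liminf g(xy)/g(x)\le\limsup g(xy)/g(x)<\infty$ as $x\to\infty$ for every $y>0$. For $F\in\mathcal{L}$, $\mathcal{H}_F$ is the set of eventually positive $h$ with $h(x)=o(x)$, $\overline{F}(x+yh(x))\sim\overline{F}(x)$ for all $y\in\mathbb{R}$, and $\limsup_{x\to\infty}h(x+yh(x))/h(x)<\infty$ for all $y\in\mathbb{R}$. ''Uniformly'' means the suprema over the parameter set of the deviations of the ratios from $1$ tend to $0$. *)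

From HB Require Import structures.
From mathcomp Require Import all_boot all_order all_algebra.
From mathcomp Require Import all_classical all_reals all_analysis.
Set Implicit Arguments. Unset Strict Implicit. Unset Printing Implicit Defensive.
Import Order.TTheory GRing.Theory Num.Theory.
Import numFieldNormedType.Exports.
Local Open Scope classical_set_scope.
Local Open Scope ring_scope.

Definition pr (d : measure_display) (T : measurableType d) (R : realType)
  (P : probability T R) (A : set T) : R := fine (P A).

Definition tailF (d : measure_display) (T : measurableType d) (R : realType)
  (P : probability T R) (f : T -> R) (x : R) : R := pr P [set w | x < f w].

(* k-th order statistic X_{k:n} (k = 1..n): the k-th smallest of X_1 w, ..., X_n w *)
Definition ordstat (T : Type) (R : realType) (n : nat) (X : 'I_n -> T -> R)
  (k : nat) (w : T) : R :=
  nth 0 (sort (fun a b : R => a <= b) [seq X i w | i <- enum 'I_n]) k.-1.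

(* F in GMDA(h) when x_F = +oo, stated on Fbar *)
Definition GMDA_inf (R : realType) (Fb h : R -> R) : Prop :=
  forall y : R, Fb (x + y * h x) / Fb x @[x --> +oo] --> expR (- y).

Definition classL (R : realType) (Fb : R -> R) : Prop :=
  (forall x, 0 <= x -> 0 < Fb x) /\
  (forall y : R, Fb (x + y) / Fb x @[x --> +oo] --> (1 : R)).

Definition domvar (R : realType) (g : R -> R) : Prop :=
  (\forall x \near +oo, 0 < g x) /\
  (forall y : R, 0 < y ->
     (exists c : R, 0 < c /\ \forall x \near +oo, c <= g (x * y) / g x) /\
     (exists C : R, \forall x \near +oo, g (x * y) / g x <= C)).

Definition classD (R : realType) (Fb : R -> R) : Prop := domvar Fb.

Definition HF (R : realType) (Fb h : R -> R) : Prop :=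
  (\forall x \near +oo, 0 < h x) /\
  (h x / x @[x --> +oo] --> (0 : R)) /\
  (forall y : R, Fb (x + y * h x) / Fb x @[x --> +oo] --> (1 : R)) /\
  (forall y : R, exists C : R, \forall x \near +oo, h (x + y * h x) / h x <= C).

Definition cond_star (d : measure_display) (T : measurableType d) (R : realType)
  (P : probability T R) (n : nat) (X : 'I_n -> T -> R) (h : R -> R) : Prop :=
  forall i j : 'I_n, i != j -> forall t : R, 0 < t ->
    pr P [set w | t * h x < `|X i w| /\ x < X j w] / tailF P (ordstat X n) x
      @[x --> +oo] --> (0 : R).

Definition cond_star2 (d : measure_display) (T : measurableType d) (R : realType)
  (P : probability T R) (n : nat) (X : 'I_n -> T -> R) (h : R -> R) : Prop :=
  exists L : R, 0 < L /\
  forall i j : 'I_n, (i < j)%N ->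
    pr P [set w | L * h x < X i w /\ L * h x < X j w] / tailF P (ordstat X n) x
      @[x --> +oo] --> (0 : R).

(* Write M = X_{n:n} and S = X_{n-1:n}.  The weighted sum differs from c_0 M by
   at most n d S, so with y = x / c_0 the event {sum > x} contains
   {M > y + t h(y)} minus {S > s h(y), M > y} and is contained in
   {M > y - t h(y)} together with {M + D S > y, S > s h(y)}.  The tail of M is
   insensitive to shifts of size t h(y) (by GMDA(h), or since h is in H_F), so
   P(M > y -+ t h(y)) ~ P(M > y) as t -> 0.  On {S > u, M > y} two distinct
   X_i, X_j exceed u and y, so (star) makes that event o(P(M > y)); the
   remaining event is o(P(M > y)) by (star-star), or in case (C) by dominated
   variation of the tail of M and of h.  The second equivalence is Bonferroni's
   inequality, whose pairwise terms are again controlled by (star). *)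

From HB Require Import structures.
From mathcomp Require Import all_boot all_order all_algebra.
From mathcomp Require Import all_classical all_reals all_analysis measurable_realfun.
From mathcomp Require Import zify ring lra.
From Stdlib Require Import Lia.
Import Order.TTheory GRing.Theory Num.Theory.
Import numFieldNormedType.Exports.
Local Open Scope classical_set_scope.
Local Open Scope ring_scope.
Set Implicit Arguments. Unset Strict Implicit.

Lemma sorted_nth_gtE (R : realDomainType) (s : seq R) (u : R) (k : nat) :
  sorted <=%R s -> (0 < k <= size s)%N ->
  (u < nth 0 s k.-1) = (size s - k < count (fun v : R => (u < v)%R) s)%N.
Proof.
move=> ss /andP[k0 ks].
have hk : (k.-1 < size s)%N by case: k k0 ks.
have mono i j : (i <= j)%N -> (j < size s)%N -> nth 0 s i <= nth 0 s j.
  move=> ij js; apply: (sorted_leq_nth le_trans lexx) => //.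
  by rewrite inE (leq_ltn_trans ij js).
have [lt_u|ge_u] := ltP u (nth 0 s k.-1).
  have : all (fun v => (u < v)%R) (drop k.-1 s).
    apply/(all_nthP 0) => m; rewrite size_drop => hm; rewrite nth_drop.
    by apply: (lt_le_trans lt_u); apply: mono; rewrite ?leq_addr -?ltn_subRL.
  rewrite all_count size_drop => /eqP cnt_drop.
  rewrite -(cat_take_drop k.-1 s) count_cat cnt_drop size_cat size_take size_drop hk.
  by apply/esym/idP; case: k k0 ks {hk lt_u cnt_drop} => // k _ ks /=; lia.
have : all (predC (fun v => (u < v)%R)) (take k s).
  apply/(all_nthP 0) => m; rewrite size_takel // => hm; rewrite nth_take //=.
  rewrite -leNgt; apply: le_trans ge_u; apply: mono => //.
  by case: k k0 ks hm {hk} => // k _ _ /=; rewrite ltnS.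
rewrite all_predC has_count -leqNgt leqn0 => /eqP cnt_take.
rewrite -(cat_take_drop k s) count_cat cnt_take add0n; apply/esym/negbTE.
by rewrite -leqNgt cat_take_drop -size_drop count_size.
Qed.

(** * Order statistics *)

Section OrderStatistics.
Variables (R : realType) (T : Type) (n : nat) (X : 'I_n -> T -> R).

Lemma ordstat_gtE k u w : (0 < k <= n)%N ->
  (u < ordstat X k w) = (n - k < #|[pred i | (u < X i w)%R]|)%N.
Proof.
move=> hk; rewrite /ordstat; set s := sort _ _.
have ss : sorted <=%R s by apply: sort_sorted => a b; exact: le_total.
have sz : size s = n by rewrite size_sort size_map size_enum_ord.
rewrite sorted_nth_gtE ?sz //.
by rewrite count_sort count_map enumT cardE /enum_mem size_filter.
Qed.

Lemma ordstat_ge0 k w : (forall i, 0 <= X i w) -> 0 <= ordstat X k w.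
Proof.
move=> X0; rewrite /ordstat; set s := sort _ _.
have [hk|hk] := ltnP k.-1 (size s); last by rewrite nth_default.
by have := mem_nth 0 hk; rewrite mem_sort => /mapP[i _ ->].
Qed.

Lemma ordstat_le k l w : (k <= l <= n)%N -> ordstat X k w <= ordstat X l w.
Proof.
move=> /andP[kl ln]; rewrite /ordstat; set s := sort _ _.
have sz : size s = n by rewrite size_sort size_map size_enum_ord.
have [l0|l_gt0] := posnP l; first by move: kl; rewrite l0 leqn0 => /eqP->.
apply: (sorted_leq_nth le_trans lexx).
- by apply: sort_sorted => a b; exact: le_total.
- by rewrite inE sz; case: k kl => [|k] /=; lia.
- by rewrite inE sz; lia.
- by case: k kl => [|k] /=; lia.
Qed.

Lemma ordstat_max_gtP u w : (0 < n)%N ->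
  (u < ordstat X n w) <-> exists i, u < X i w.
Proof.
move=> n0; rewrite ordstat_gtE ?n0 ?leqnn // subnn; split.
  by move/card_gt0P => [i]; rewrite inE => ?; exists i.
by move=> [i Hi]; apply/card_gt0P; exists i; rewrite inE.
Qed.

Lemma ordstat_penult_gt u w j : (2 <= n)%N -> u < ordstat X n.-1 w ->
  exists2 i, i != j & u < X i w.
Proof.
move=> n2; rewrite ordstat_gtE; last by apply/andP; split; lia.
have -> : (n - n.-1 = 1)%N by lia.
rewrite (cardD1 j) => h.
have : (0 < #|[predD1 [pred i | (u < X i w)%R] & j]|)%N.
  by move: h; case: (j \in _); rewrite /= ?add1n ?add0n ?ltnS //; apply: ltnW.
by move/card_gt0P => [i]; rewrite !inE => /andP[? ?]; exists i.
Qed.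

End OrderStatistics.

Lemma measurable_fun_gt (d : measure_display) (T : measurableType d)
  (R : realType) (f : T -> R) y :
  measurable_fun setT f -> measurable [set w | y < f w].
Proof.
move=> mf; have -> : [set w | y < f w] = setT `&` f @^-1` `]y, +oo[.
  by apply/seteqP; split => w /=; rewrite in_itv /= andbT //; move=> [].
exact: mf.
Qed.

Lemma measurable_ordstat (d : measure_display) (T : measurableType d)
  (R : realType) (n : nat) (X : 'I_n -> T -> R) k :
  (0 < k <= n)%N -> (forall i, measurable_fun setT (X i)) ->
  measurable_fun setT (ordstat X k).
Proof.
move=> hk mX; apply: (measurability _ (RGenOInfty.measurableE R)) => //.
move=> _ [_ [u ->] <-].
pose count_gt w := \sum_(i < n) (\1_([set w | u < X i w]) w : R).
have count_gtE w : count_gt w = (#|[pred i | u < X i w]|)%:R.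
  rewrite /count_gt (eq_bigr (fun i => (nat_of_bool (u < X i w))%:R)); last first.
    by move=> i _; rewrite indicE; congr (nat_of_bool _)%:R; apply/idP/idP;
      [move/set_mem|move=> ?; exact: mem_set].
  rewrite -natr_sum -sum1_card [in RHS]big_mkcond /=.
  by congr _%:R; apply: eq_bigr => i _; rewrite inE; case: (_ < _).
have -> : setT `&` ordstat X k @^-1` `]u, +oo[ = [set w | (n - k)%:R < count_gt w].
  apply/seteqP; split => w /=; rewrite in_itv /= andbT count_gtE ltr_nat ordstat_gtE //.
  by move=> [].
apply: measurable_fun_gt; apply: measurable_sum => i.
by apply: measurable_indic; apply: measurable_fun_gt.
Qed.

(** * Probability bounds *)

Section Probability.
Variables (d : measure_display) (T : measurableType d) (R : realType)
  (P : probability T R).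

Lemma pr_ge0 A : 0 <= pr P A.
Proof. exact/fine_ge0/measure_ge0. Qed.

Lemma le_pr A B : measurable A -> measurable B -> A `<=` B -> pr P A <= pr P B.
Proof.
move=> mA mB AB; apply: fine_le; rewrite ?inE ?fin_num_measure //.
by apply: le_measure; rewrite ?inE.
Qed.

Lemma pr_setU_le A B : measurable A -> measurable B ->
  pr P (A `|` B) <= pr P A + pr P B.
Proof.
move=> mA mB; rewrite /pr -fineD ?fin_num_measure //.
apply: fine_le; rewrite ?fin_numD ?fin_num_measure //; first exact: measurableU.
exact: measureU2.
Qed.

Lemma pr_le_sum_cover (I : finType) (A : set T) (F : I -> set T) :
  measurable A -> (forall i, measurable (F i)) ->
  (forall w, A w -> exists i, F i w) -> pr P A <= \sum_i pr P (F i).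
Proof.
move=> mA mF AF; have [x0 _|empty] := pickP (@predT I); last first.
  have -> : A = set0 by apply/seteqP; split => // w /AF [i]; have := empty i.
  by rewrite /pr measure0; apply: sumr_ge0 => i _; apply: pr_ge0.
pose G k := F (nth x0 (enum I) k).
have -> : \sum_i pr P (F i) = \sum_(k < #|I|) pr P (G k).
  by rewrite -big_enum /= (big_nth x0) -cardE big_mkord.
have AG : A `<=` \big[setU/set0]_(k < #|I|) G k.
  move=> w /AF [i Fi]; rewrite -bigcup_mkord.
  exists (index i (enum I)); first by rewrite /= cardE index_mem mem_enum.
  by rewrite /G nth_index ?mem_enum.
have := @content_subadditive _ _ _ P A G _ (fun k _ => mF (nth x0 (enum I) k)) mA AG.
rewrite -EFin_sum_fine; last by move=> k _; apply: fin_num_measure; exact: mF.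
by move=> le_sum; apply: fine_le le_sum; rewrite ?fin_num_measure.
Qed.

Lemma pr_le_sum2_cover (I J : finType) (A : set T) (F : I -> J -> set T) :
  measurable A -> (forall i j, measurable (F i j)) ->
  (forall w, A w -> exists i j, F i j w) -> pr P A <= \sum_i \sum_j pr P (F i j).
Proof.
move=> mA mF AF; rewrite pair_bigA /=.
apply: (@pr_le_sum_cover _ A (fun p : I * J => F p.1 p.2)) => //.
by move=> w /AF [i [j Fij]]; exists (i, j).
Qed.

Lemma sum_pr_le_pairwise (m : nat) (A : 'I_m -> set T) (U : set T) :
  (forall i, measurable (A i)) -> measurable U -> (forall i, A i `<=` U) ->
  \sum_i pr P (A i) <=
  pr P U + \sum_i \sum_j (if i != j then pr P (A i `&` A j) else 0).
Proof.
move=> mA mU AU.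
pose B i := A i `\` [set w | exists j, j != i /\ A j w].
have mB i : measurable (B i).
  apply: measurableD => //; rewrite [X in measurable X](_ : _ =
    \bigcup_(j in [set j | j != i]) A j); last first.
    by apply/seteqP; split => w /= [j]; [move=> [] ? ?|move=> ? ?]; exists j.
  by apply: fin_bigcup_measurable => //; exact: finite_finset.
have le_B i : pr P (A i) <=
    pr P (B i) + \sum_j (if i != j then pr P (A i `&` A j) else 0).
  pose G j := if i == j then B i else A i `&` A j.
  have mG j : measurable (G j) by rewrite /G; case: eqP => _ //; apply: measurableI.
  have cov w : A i w -> exists j, G j w.
    move=> Aw; have [[j [ji Ajw]]|nj] := pselect (exists j, j != i /\ A j w).
      by exists j; rewrite /G eq_sym (negbTE ji).
    by exists i; rewrite /G eqxx.
  apply: le_trans (pr_le_sum_cover (mA i) mG cov) _.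
  rewrite (bigD1 i) //= [X in _ <= _ + X](bigD1 i) //= /G eqxx /= add0r.
  by rewrite lerD2l; apply: ler_sum => j /negbTE; rewrite eq_sym => ->.
apply: le_trans (ler_sum _ (fun i _ => le_B i)) _.
rewrite big_split /= lerD2r.
have tB : trivIset setT B.
  move=> i j _ _ [w [[Aiw Ni] [Ajw Nj]]]; apply/eqP; apply/negPn/negP => ij.
  by apply: Ni; exists j; split => //; rewrite eq_sym.
have := @measure_bigsetU_ord _ _ _ P m xpredT B mB tB.
rewrite -EFin_sum_fine; last by move=> i _; apply: fin_num_measure; exact: mB.
move=> sumB; rewrite [leLHS](_ : _ = pr P (\big[setU/set0]_(i < m) B i)); last by rewrite /pr sumB.
apply: le_pr => //; first exact: bigsetU_measurable.
apply: (big_ind (fun S => S `<=` U)) => // [S1 S2 ? ? w [] ?|i _ w [Aiw _]]; auto.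
exact: AU Aiw.
Qed.

End Probability.

Lemma near_comp_linear (R : realType) (A : R -> Prop) (g : R -> R) (k : R) :
  0 < k -> (\forall z \near +oo, A z) -> (\forall y \near +oo, k * y <= g y) ->
  \forall y \near +oo, A (g y).
Proof.
move=> k0 [M0 [_ HA]] [M1 [_ Hg]].
exists (Num.max M1 (M0 / k)); split; first by rewrite num_real.
move=> y; rewrite gt_max => /andP[y1 y2]; apply: HA.
by apply: lt_le_trans (Hg _ y1); rewrite -ltr_pdivrMl // mulrC.
Qed.

Lemma cvgr_near_bounds (R : realType) (f : R -> R) (l : R) :
  f x @[x --> +oo] --> l ->
  forall e, 0 < e -> \forall x \near +oo, l - e <= f x <= l + e.
Proof.
move=> /cvgrPdist_le cvg_f e e0; apply: filterS (cvg_f e e0) => x.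
by rewrite ler_distl => /andP[h1 h2]; apply/andP; split; lra.
Qed.

Lemma near_pinfty_div (R : realType) (A : R -> Prop) (a b : R) : 0 < a -> a <= b ->
  (\forall y \near +oo, A y) -> \forall x \near +oo, forall k, a <= k <= b -> A (x / k).
Proof.
move=> a0 ab [Y [_ HY]]; have b0 : 0 < b by apply: lt_le_trans ab.
exists (Num.max (b * Y) 0); split; first by rewrite num_real.
move=> x; rewrite gt_max => /andP[xY x0] k /andP[ak kb]; apply: HY.
have k0 : 0 < k by apply: lt_le_trans ak.
apply: (@lt_le_trans _ _ (x / b)); first by rewrite ltr_pdivlMr // mulrC.
by rewrite ler_wpM2l ?(ltW x0) // lef_pV2 ?posrE.
Qed.

Lemma sublinear_shift_ge_half (R : realType) (h : R -> R) (K : R) : 0 <= K ->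
  (forall c, 0 < c -> \forall y \near +oo, h y <= c * y) ->
  \forall y \near +oo, 2^-1 * y <= y - K * h y.
Proof.
move=> K0 h_sub; have c0 : 0 < (2 * (K + 1))^-1 by rewrite invr_gt0 mulr_gt0 // ltr_wpDl.
apply: filterS2 (nbhs_pinfty_gt (num_real 0)) (h_sub _ c0) => y y0 hy.
have h1 : K * h y <= K * (2 * (K + 1))^-1 * y by rewrite -mulrA ler_wpM2l.
have h2 : K * (2 * (K + 1))^-1 <= 2^-1.
  rewrite invfM mulrCA -[leRHS]mulr1 ler_wpM2l ?invr_ge0 //.
  by rewrite ler_pdivrMr ?ltr_wpDl // mul1r lerDl.
have : K * (2 * (K + 1))^-1 * y <= 2^-1 * y by rewrite ler_wpM2r // ltW.
lra.
Qed.

Lemma domvar_le (R : realType) (g : R -> R) (k : R) : domvar g -> 0 < k ->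
  exists2 C, 0 < C & \forall x \near +oo, g (k * x) <= C * g x.
Proof.
move=> [g_pos g_dv] k0; have [_ [C gC]] := g_dv k k0.
exists (Num.max C 1); first by rewrite lt_max ltr01 orbT.
apply: filterS2 g_pos gC => x gx; rewrite ler_pdivrMr // mulrC => gC_x.
apply: le_trans gC_x _.
by rewrite ler_wpM2r ?(ltW gx) // le_max lexx.
Qed.

Lemma expRN2_le (R : realType) : expR (-2) <= (3 : R)^-1.
Proof.
rewrite expRN lef_pV2 ?posrE ?expR_gt0 //.
by have := expR_ge1Dx (2 : R); rewrite (_ : 1 + 2 = 3 :> R) //; lra.
Qed.

Lemma ratio_sub1_le (R : realFieldType) (p q e : R) :
  0 < q -> (1 - e) * q <= p <= (1 + e) * q -> `|p / q - 1| <= e.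
Proof.
move=> q0 /andP[h1 h2]; rewrite ler_norml; apply/andP; split.
  by rewrite lerBrDr addrC ler_pdivlMr.
by rewrite lerBlDr addrC ler_pdivrMr.
Qed.

Lemma inv_ratio_sub1_le (R : realFieldType) (p q e : R) :
  0 < p -> 0 <= e -> p <= q <= (1 + e) * p -> `|p / q - 1| <= e.
Proof.
move=> p0 e0 /andP[h1 h2]; have q0 : 0 < q by apply: lt_le_trans h1.
rewrite ler_norml; apply/andP; split; last by rewrite lerBlDr ler_pdivrMr //; nra.
have h3 : e * p <= e * q by apply: ler_wpM2l.
rewrite lerBrDr addrC ler_pdivlMr //; move: h2 h3; rewrite ?mulrDl ?mulrBl ?mul1r.
lra.
Qed.

(** * Tails of weighted sums of order statistics *)

Section WeightedOrderStatistics.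
Variables (d : measure_display) (T : measurableType d) (R : realType)
  (P : probability T R) (n : nat) (X : 'I_n -> T -> R).
Hypothesis n2 : (2 <= n)%N.
Hypothesis mX : forall i, measurable_fun setT (X i).
Hypothesis X0 : forall i w, 0 <= X i w.

Let n0 : (0 < n)%N. Proof. exact: leq_trans n2. Qed.

Local Notation Xnn := (ordstat X n).
Local Notation Xn1 := (ordstat X n.-1).
Local Notation Fbar := (tailF P (ordstat X n)).

Lemma measurable_Xnn : measurable_fun setT Xnn.
Proof. by apply: measurable_ordstat => //; rewrite n0 leqnn. Qed.

Lemma measurable_Xn1 : measurable_fun setT Xn1.
Proof. by apply: measurable_ordstat => //; apply/andP; split; lia. Qed.

Lemma Xn1_ge0 w : 0 <= Xn1 w.
Proof. exact: ordstat_ge0. Qed.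

Lemma Xn1_le_Xnn w : Xn1 w <= Xnn w.
Proof. by apply: ordstat_le; apply/andP; split; lia. Qed.

Lemma measurable_Xnn_gt y : measurable [set w | y < Xnn w].
Proof. exact: measurable_fun_gt measurable_Xnn. Qed.

Lemma measurable_Xn1_Xnn_gt u y : measurable [set w | u < Xn1 w /\ y < Xnn w].
Proof. exact: measurableI (measurable_fun_gt _ measurable_Xn1) (measurable_Xnn_gt y). Qed.

Lemma Fbar_ge0 y : 0 <= Fbar y.
Proof. exact: pr_ge0. Qed.

Lemma Fbar_le y1 y2 : y1 <= y2 -> Fbar y2 <= Fbar y1.
Proof.
move=> y12; apply: le_pr; try exact: measurable_Xnn_gt.
by move=> w /= h; apply: le_lt_trans h.
Qed.

Definition cross_event (i j : 'I_n) (u y : R) :=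
  [set w | i != j /\ u < `|X i w| /\ y < X j w].

Definition cross_tail (u y : R) := \sum_i \sum_j pr P (cross_event i j u y).

Lemma measurable_cross_event i j u y : measurable (cross_event i j u y).
Proof.
have [ij|/negPn/eqP->] := boolP (i != j); last first.
  rewrite [E in measurable E](_ : _ = set0) //.
  by rewrite /cross_event eqxx; apply/seteqP; split => w //= [].
rewrite [E in measurable E](_ : _ = [set w | u < `|X i w|] `&` [set w | y < X j w]).
  apply: measurableI; apply: measurable_fun_gt => //.
  exact: measurableT_comp (@normr_measurable _ _) (mX i).
by apply/seteqP; split => w /=; [case=> _|move=> ?; split].
Qed.

Lemma pr_Xn1_Xnn_gt_le u v y : u <= v ->
  pr P [set w | v < Xn1 w /\ y < Xnn w] <= cross_tail u y.
Proof.
move=> uv; apply: (@pr_le_sum2_cover _ _ _ P _ _ _ (fun i j => cross_event i j u y)).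
- exact: measurable_Xn1_Xnn_gt.
- by move=> i j; exact: measurable_cross_event.
move=> w [h1 h2]; have [j hj] := (ordstat_max_gtP X y w n0).1 h2.
have [i ij hi] := ordstat_penult_gt j n2 h1.
exists i, j; split => //; split => //.
by apply: le_lt_trans uv _; apply: lt_le_trans hi _; apply: ler_norm.
Qed.

Lemma weighted_sum_dev (c : nat -> R) (dd : R) w : 0 <= dd ->
  (forall i, (0 < i < n)%N -> - dd <= c i <= dd) ->
  `| \sum_(i < n) c i * ordstat X (n - i) w - c 0%N * Xnn w | <= n%:R * dd * Xn1 w.
Proof.
move=> dd0 hc; pose i0 : 'I_n := Ordinal n0.
rewrite (bigD1 i0) //= subn0 addrC addrK.
apply: le_trans (ler_norm_sum _ _ _) _.
apply: (@le_trans _ _ (\sum_(i < n | i != i0) dd * Xn1 w)).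
  apply: ler_sum => i ii0; rewrite normrM.
  have ipos : (0 < i)%N.
    by rewrite lt0n; apply: contraNneq ii0 => i_0; apply/eqP/val_inj.
  have ci : `|c i| <= dd by rewrite ler_norml; apply: hc; rewrite ipos ltn_ord.
  have o1 : ordstat X (n - i) w <= Xn1 w.
    by apply: ordstat_le; apply/andP; split; have := ltn_ord i; lia.
  have o0 : 0 <= ordstat X (n - i) w by apply: ordstat_ge0.
  by rewrite (ger0_norm o0); apply: ler_pM.
rewrite [leRHS](_ : _ = \sum_(i < n) dd * Xn1 w); last first.
  by rewrite sumr_const card_ord -mulrA mulr_natl.
by rewrite [leRHS](bigD1 i0) //= lerDr mulr_ge0 ?Xn1_ge0.
Qed.

Lemma weighted_sum_gt_cases (c : nat -> R) a dd t u y w :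
  0 < a -> a <= c 0%N -> 0 <= dd -> 0 < t ->
  (forall i, (0 < i < n)%N -> - dd <= c i <= dd) ->
  c 0%N * y < \sum_(i < n) c i * ordstat X (n - i) w ->
  y - t * u < Xnn w \/
  y < Xnn w + (n%:R * dd / a) * Xn1 w /\ t / (n%:R * dd / a + 1) * u < Xn1 w.
Proof.
move=> a0 ac dd0 t0 hc hS.
have := weighted_sum_dev w dd0 hc; rewrite ler_norml => /andP[_ hD].
set D := n%:R * dd in hD *; have D0 : 0 <= D by rewrite mulr_ge0.
set D1 := D / a; have D10 : 0 <= D1 by rewrite divr_ge0 // ltW.
have s0 := Xn1_ge0 w.
have [hM|hM] := ltP (y - t * u) (Xnn w); [by left|right].
have c0_gt0 : 0 < c 0%N by apply: lt_le_trans ac.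
have h1 : c 0%N * (y - Xnn w) < D * Xn1 w by rewrite mulrBr; lra.
have h2 : y - Xnn w < D1 * Xn1 w.
  have [hq|hq] := ltP (y - Xnn w) 0; first by apply: lt_le_trans hq (mulr_ge0 _ _).
  rewrite /D1 mulrAC ltr_pdivlMr //; apply: le_lt_trans h1.
  by rewrite [leRHS]mulrC; apply: ler_wpM2l.
split; first lra.
rewrite mulrAC ltr_pdivrMr ?ltr_wpDl // mulrDr mulr1 [Xn1 w * _]mulrC; lra.
Qed.

Lemma Xnn_gt_cases (c : nat -> R) a dd t u y w :
  0 < a -> a <= c 0%N -> 0 <= dd -> 0 < t -> 0 <= u ->
  (forall i, (0 < i < n)%N -> - dd <= c i <= dd) ->
  y + t * u < Xnn w ->
  c 0%N * y < \sum_(i < n) c i * ordstat X (n - i) w \/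
  t / (n%:R * dd / a + 1) * u < Xn1 w /\ y < Xnn w.
Proof.
move=> a0 ac dd0 t0 u0 hc hM.
have := weighted_sum_dev w dd0 hc; rewrite ler_norml => /andP[hD _].
set D := n%:R * dd in hD *; have D0 : 0 <= D by rewrite mulr_ge0.
set D1 := D / a; have D10 : 0 <= D1 by rewrite divr_ge0 // ltW.
have tu0 : 0 <= t * u by rewrite mulr_ge0 // ltW.
set s := t / (D1 + 1).
have [hs|hs] := ltP (s * u) (Xn1 w); [by right; split => //; lra|left].
have c0_gt0 : 0 < c 0%N by apply: lt_le_trans ac.
have Ds : D * s <= c 0%N * t.
  rewrite /s mulrA ler_pdivrMr ?ltr_wpDl // mulrDr mulr1.
  have -> : c 0%N * t * D1 = (c 0%N / a) * (D * t) by rewrite /D1; ring.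
  have ca : 1 <= c 0%N / a by rewrite ler_pdivlMr // mul1r.
  have : 1 * (D * t) <= (c 0%N / a) * (D * t) by rewrite ler_wpM2r // mulr_ge0 // ltW.
  have : 0 <= c 0%N * t by rewrite mulr_ge0 // ltW.
  rewrite mul1r; lra.
have hDS : D * Xn1 w <= c 0%N * t * u.
  apply: (@le_trans _ _ (D * (s * u))); first exact: ler_wpM2l.
  by rewrite mulrA ler_wpM2r.
have : c 0%N * (y + t * u) < c 0%N * Xnn w by rewrite ltr_pM2l.
rewrite mulrDr mulrA; lra.
Qed.

Definition spread_event (D1 u y : R) :=
  [set w | y < Xnn w + D1 * Xn1 w /\ u < Xn1 w].

Lemma measurable_spread_event D1 u y : measurable (spread_event D1 u y).
Proof.
apply: measurableI; apply: measurable_fun_gt; last exact: measurable_Xn1.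
apply: measurable_funD; first exact: measurable_Xnn.
by apply: measurable_funM => //; exact: measurable_Xn1.
Qed.

Lemma measurable_weighted_sum_gt (c : nat -> R) x :
  measurable [set w | x < \sum_(i < n) c i * ordstat X (n - i) w].
Proof.
apply: measurable_fun_gt; apply: measurable_sum => i; apply: measurable_funM => //.
by apply: measurable_ordstat => //; rewrite subn_gt0 ltn_ord leq_subr.
Qed.

Section FixedLevel.
Variables (c : nat -> R) (a dd t u y : R).
Hypotheses (a0 : 0 < a) (ac : a <= c 0%N) (dd0 : 0 <= dd) (t0 : 0 < t).
Hypothesis hc : forall i, (0 < i < n)%N -> - dd <= c i <= dd.
Let D1 := n%:R * dd / a.
Let s := t / (D1 + 1).
Local Notation sum_gt := [set w | c 0%N * y < \sum_(i < n) c i * ordstat X (n - i) w].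

Lemma pr_weighted_sum_gt_le :
  pr P sum_gt <= Fbar (y - t * u) + pr P (spread_event D1 (s * u) y).
Proof.
apply: le_trans (pr_setU_le P (measurable_Xnn_gt _) (measurable_spread_event _ _ _)).
apply: le_pr; first exact: measurable_weighted_sum_gt.
  exact: measurableU (measurable_Xnn_gt _) (measurable_spread_event _ _ _).
by move=> w hw; exact: (weighted_sum_gt_cases u a0 ac dd0 t0 hc hw).
Qed.

Lemma pr_weighted_sum_gt_ge : 0 <= u ->
  Fbar (y + t * u) <= pr P sum_gt + cross_tail (s * u) y.
Proof.
move=> u0; apply: (@le_trans _ _ (pr P (sum_gt `|` [set w | s * u < Xn1 w /\ y < Xnn w]))).
  apply: le_pr; first exact: measurable_Xnn_gt.
    exact: measurableU (measurable_weighted_sum_gt _ _) (measurable_Xn1_Xnn_gt _ _).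
  by move=> w hw; exact: (Xnn_gt_cases a0 ac dd0 t0 u0 hc hw).
apply: le_trans (pr_setU_le P _ _) _.
- exact: measurable_weighted_sum_gt.
- exact: measurable_Xn1_Xnn_gt.
by rewrite lerD2l; apply: pr_Xn1_Xnn_gt_le.
Qed.

Lemma weighted_sum_tail_ratio e : 0 < Fbar y -> 0 <= u ->
  Fbar (y - t * u) <= (1 + e) * Fbar y -> (1 - e) * Fbar y <= Fbar (y + t * u) ->
  pr P (spread_event D1 (s * u) y) <= e * Fbar y -> cross_tail (s * u) y <= e * Fbar y ->
  `|pr P sum_gt / Fbar y - 1| <= e + e.
Proof.
move=> F0 u0 up lo spread cross; apply: ratio_sub1_le => //.
have := pr_weighted_sum_gt_le; have := pr_weighted_sum_gt_ge u0.
by move=> ge le; apply/andP; split; lra.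
Qed.

End FixedLevel.

Lemma Xnn_tail_le_sum y : Fbar y <= \sum_(i < n) pr P [set w | y < X i w].
Proof.
apply: pr_le_sum_cover; first exact: measurable_Xnn_gt.
  by move=> i; apply: measurable_fun_gt.
by move=> w /(ordstat_max_gtP X y w n0).
Qed.

Lemma sum_le_Xnn_tail u y : u <= y ->
  \sum_(i < n) pr P [set w | y < X i w] <= Fbar y + cross_tail u y.
Proof.
move=> uy.
apply: le_trans (@sum_pr_le_pairwise _ _ _ P _ (fun i => [set w | y < X i w]) _ _
  (measurable_Xnn_gt y) _) _.
- by move=> i; apply: measurable_fun_gt.
- by move=> i w hw; apply/(ordstat_max_gtP X y w n0); exists i.
rewrite lerD2l; apply: ler_sum => i _; apply: ler_sum => j _.
have [ij|_] := ifP; last exact: pr_ge0.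
apply: le_pr; [exact: measurableI (measurable_fun_gt _ _) (measurable_fun_gt _ _)|
  exact: measurable_cross_event|].
move=> w [hi hj]; split; first by rewrite ij.
by split => //; apply: le_lt_trans uy (lt_le_trans hi (ler_norm _)).
Qed.

Lemma Xnn_tail_ratio u y e : 0 < Fbar y -> 0 <= e -> u <= y ->
  cross_tail u y <= e * Fbar y ->
  `|Fbar y / \sum_(i < n) pr P [set w | y < X i w] - 1| <= e.
Proof.
move=> F0 e0 uy cross; apply: inv_ratio_sub1_le => //; apply/andP; split.
  exact: Xnn_tail_le_sum.
by apply: le_trans (sum_le_Xnn_tail uy) _; lra.
Qed.

Definition negligible (g : R -> R) :=
  forall e, 0 < e -> \forall y \near +oo, g y <= e * Fbar y.

Lemma negligible_ratio (g : R -> R) : (\forall y \near +oo, 0 < Fbar y) ->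
  g x / Fbar x @[x --> +oo] --> 0 -> negligible g.
Proof.
move=> Fpos cvg_g e e0; apply: filterS2 Fpos (cvgr_near_bounds cvg_g e0) => y F0.
by move=> /andP[_]; rewrite add0r ler_pdivrMr // mulrC.
Qed.

Lemma negligible_le (g g1 : R -> R) : negligible g1 ->
  (\forall y \near +oo, g y <= g1 y) -> negligible g.
Proof.
move=> g1_small gg1 e e0; apply: filterS2 (g1_small e e0) gg1 => y h1 h2.
exact: le_trans h2 h1.
Qed.

Lemma negligible0 (g : R -> R) : (\forall y \near +oo, g y <= 0) -> negligible g.
Proof.
move=> g0 e e0; apply: filterS g0 => y /le_trans; apply.
by rewrite mulr_ge0 ?Fbar_ge0 ?ltW.
Qed.

Lemma negligible_add (g g1 g2 : R -> R) : negligible g1 -> negligible g2 ->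
  (\forall y \near +oo, g y <= g1 y + g2 y) -> negligible g.
Proof.
move=> s1 s2 g12 e e0; have e2 : 0 < e / 2 by rewrite divr_gt0.
apply: filterS3 (s1 _ e2) (s2 _ e2) g12 => y h1 h2 /le_trans; apply.
by rewrite [e]splitr mulrDl lerD.
Qed.

Lemma negligible_sum (I : finType) (g : R -> R) (G : I -> R -> R) :
  (forall i, negligible (G i)) ->
  (\forall y \near +oo, g y <= \sum_i G i y) -> negligible g.
Proof.
move=> sG gG e e0; pose e' := e / (#|I|%:R + 1).
have e'0 : 0 < e' by rewrite divr_gt0 // ltr_wpDl.
apply: filterS2 (filter_forall _ (fun i => sG i e' e'0)) gG => y hG /le_trans; apply.
apply: (@le_trans _ _ (\sum_(i : I) e' * Fbar y)); first by apply: ler_sum => i _.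
rewrite sumr_const -mulr_natl mulrA ler_wpM2r ?Fbar_ge0 //.
rewrite /e' mulrA ler_pdivrMr ?ltr_wpDl // mulrDr mulr1 mulrC lerDl.
exact: ltW.
Qed.

Lemma cross_tail_negligible (h : R -> R) : (\forall y \near +oo, 0 < Fbar y) ->
  cond_star P X h -> forall u, 0 < u -> negligible (fun y => cross_tail (u * h y) y).
Proof.
move=> Fpos cs u u0.
apply: (negligible_sum (G := fun i y => \sum_j pr P (cross_event i j (u * h y) y)));
  last exact: filterE.
move=> i; apply: (negligible_sum (G := fun j y => pr P (cross_event i j (u * h y) y)));
  last exact: filterE.
move=> j; have [ij|/negPn/eqP<-] := boolP (i != j).
  apply: (negligible_le (negligible_ratio Fpos (cs i j ij u u0))); apply: filterE => y.
  apply: le_pr; [exact: measurable_cross_event| |by move=> w [_ []]].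
  apply: measurableI; apply: measurable_fun_gt => //.
  exact: measurableT_comp (@normr_measurable _ _) (mX i).
apply: negligible0; apply: filterE => y.
by rewrite /cross_event eqxx [X in pr P X](_ : _ = set0) ?/pr ?measure0 //; apply/seteqP; split => w //= [].
Qed.

Lemma negligible_comp (f g z : R -> R) (k C : R) : 0 < k -> 0 < C ->
  negligible f -> (\forall y \near +oo, k * y <= z y) ->
  (\forall y \near +oo, Fbar (z y) <= C * Fbar y) ->
  (\forall y \near +oo, g y <= f (z y)) -> negligible g.
Proof.
move=> k0 C0 f_small kz Fz gfz e e0; have eC : 0 < e / C by rewrite divr_gt0.
apply: filterS3 (near_comp_linear k0 (f_small _ eC) kz) Fz gfz => y h1 h2 h3.
apply: le_trans h3 (le_trans h1 (le_trans (ler_wpM2l (ltW eC) h2) _)).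
by rewrite mulrA divfK ?gt_eqF.
Qed.

Definition tail_flat (h : R -> R) := forall e, 0 < e -> exists2 t, 0 < t &
  \forall y \near +oo,
    Fbar (y - t * h y) <= (1 + e) * Fbar y /\ (1 - e) * Fbar y <= Fbar (y + t * h y).

Definition spread_negligible (h : R -> R) := forall D1 s, 0 <= D1 -> 0 < s ->
  negligible (fun y => pr P (spread_event D1 (s * h y) y)).

Definition weighted_ordstat_tail_equiv := forall a b dd : R, 0 < a -> a <= b -> 0 <= dd ->
  forall eps : R, 0 < eps ->
  \forall x \near +oo, forall c : nat -> R,
    a <= c 0%N <= b -> (forall i, (0 < i < n)%N -> - dd <= c i <= dd) ->
    `| pr P [set w | x < \sum_(i < n) c i * ordstat X (n - i) w]
         / pr P [set w | x < c 0%N * ordstat X n w] - 1 | <= eps /\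
    `| pr P [set w | x < c 0%N * ordstat X n w]
         / (\sum_(i < n) pr P [set w | x < c 0%N * X i w]) - 1 | <= eps.

Theorem tail_equiv_of_flat (h : R -> R) :
  (\forall y \near +oo, 0 < Fbar y) -> (\forall y \near +oo, 0 <= h y <= y) ->
  tail_flat h -> cond_star P X h -> spread_negligible h ->
  weighted_ordstat_tail_equiv.
Proof.
move=> Fpos h_le flat cs spread a b dd a0 ab dd0 eps eps0.
pose e := eps / 2; have e0 : 0 < e by rewrite divr_gt0.
have [t t0 flat_t] := flat e e0.
pose D1 := n%:R * dd / a; have D10 : 0 <= D1 by rewrite divr_ge0 ?mulr_ge0 // ltW.
pose s := t / (D1 + 1); have s0 : 0 < s by rewrite divr_gt0 // ltr_wpDl.
have cross := cross_tail_negligible Fpos cs.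
have near_y : \forall y \near +oo, [/\ 0 < Fbar y, 0 <= h y <= y,
    Fbar (y - t * h y) <= (1 + e) * Fbar y /\ (1 - e) * Fbar y <= Fbar (y + t * h y),
    pr P (spread_event D1 (s * h y) y) <= e * Fbar y &
    cross_tail (s * h y) y <= e * Fbar y /\ cross_tail (1 * h y) y <= eps * Fbar y].
  near=> y; do !split; near: y.
  - exact: Fpos.
  - exact: h_le.
  - by apply: filterS (flat_t) => ? [].
  - by apply: filterS (flat_t) => ? [].
  - exact: spread.
  - exact: cross.
  - exact: cross.
apply: filterS (near_pinfty_div a0 ab near_y) => x near_x c hc hci.
have [F0 /andP[h0 hy] [up lo] spread_y [cross_s cross_1]] := near_x _ hc.
move/andP: hc => [ac _]; have c0 : 0 < c 0%N by apply: lt_le_trans ac.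
pose y := x / c 0%N; have -> : x = c 0%N * y by rewrite /y mulrC divfK // gt_eqF.
have scale (f : T -> R) : [set w | c 0%N * y < c 0%N * f w] = [set w | y < f w].
  by apply/seteqP; split => w /=; rewrite ltr_pM2l.
rewrite scale; under eq_bigr do rewrite scale.
split; first by rewrite [eps]splitr;
  exact: (weighted_sum_tail_ratio a0 ac dd0 t0 hci F0 h0 up lo spread_y cross_s).
rewrite mul1r in cross_1; exact: Xnn_tail_ratio F0 (ltW eps0) hy cross_1.
Unshelve. all: by end_near.
Qed.

(** * The three sets of hypotheses *)

Definition shift_bounds (h : R -> R) := forall K, 0 <= K ->
  (exists2 C, 0 < C & \forall y \near +oo, Fbar (y - K * h y) <= C * Fbar y) /\
  (exists2 C, 0 < C & \forall y \near +oo, h (y - K * h y) <= C * h y).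

Lemma Xn1_tail_negligible (g : R -> R) : (\forall y \near +oo, 0 < Fbar y) ->
  (forall i j : 'I_n, (i < j)%N ->
    pr P [set w | g x < X i w /\ g x < X j w] / Fbar x @[x --> +oo] --> 0) ->
  negligible (fun y => pr P [set w | g y < Xn1 w]).
Proof.
move=> Fpos pair_small.
pose G (i j : 'I_n) y := if (i < j)%N then [set w | g y < X i w /\ g y < X j w] else set0.
have mG i j y : measurable (G i j y).
  by rewrite /G; case: ifP => _ //; apply: measurableI; exact: measurable_fun_gt.
apply: (@negligible_sum _ _ (fun i y => \sum_j pr P (G i j y))); last first.
  apply: filterE => y; apply: (@pr_le_sum2_cover _ _ _ P _ _ _ (fun i j => G i j y)) => //.
    exact: measurable_fun_gt measurable_Xn1.
  move=> w hw; have hM : g y < Xnn w by apply: lt_le_trans hw (Xn1_le_Xnn w).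
  have [j hj] := (ordstat_max_gtP X _ w n0).1 hM.
  have [i ij hi] := ordstat_penult_gt j n2 hw.
  move: ij; rewrite -(inj_eq val_inj) neq_ltn => /orP[lij|lji].
  + by exists i, j; rewrite /G lij.
  + by exists j, i; rewrite /G lji.
move=> i; apply: (@negligible_sum _ _ (fun j y => pr P (G i j y))); last exact: filterE.
move=> j; have [ij|ji] := boolP (i < j)%N; rewrite /G ?ij ?(negbTE ji).
  exact: negligible_ratio Fpos (pair_small i j ij).
by apply: negligible0; apply: filterE => y; rewrite /pr measure0.
Qed.

Lemma spread_negligible_star2 (h : R -> R) : (\forall y \near +oo, 0 < Fbar y) ->
  (forall c, 0 < c -> \forall y \near +oo, h y <= c * y) -> shift_bounds h ->
  cond_star P X h -> cond_star2 P X h -> spread_negligible h.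
Proof.
move=> Fpos h_sub shift cs [L [L0 cs2]] D1 s D10 s0.
pose K := D1 * L; have K0 : 0 <= K by rewrite mulr_ge0 // ltW.
have [[C C0 FC] [C' C'0 hC']] := shift K K0.
pose z y := y - K * h y.
apply: (@negligible_add _ (fun y => pr P [set w | L * h y < Xn1 w])
                         (fun y => pr P [set w | s * h y < Xn1 w /\ z y < Xnn w])).
- exact: Xn1_tail_negligible Fpos cs2.
- apply: (@negligible_comp (fun y => cross_tail (s / C' * h y) y) _ z 2^-1 C) => //.
  + exact: cross_tail_negligible Fpos cs _ (divr_gt0 s0 C'0).
  + exact: sublinear_shift_ge_half.
  + apply: filterS hC' => y hz; apply: pr_Xn1_Xnn_gt_le.
    by rewrite -mulrA ler_wpM2l ?(ltW s0) // ler_pdivrMl.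
- apply: filterE => y; apply: le_trans (pr_setU_le P _ _).
  + apply: le_pr; [exact: measurable_spread_event| |].
      exact: measurableU (measurable_fun_gt _ measurable_Xn1) (measurable_Xn1_Xnn_gt _ _).
    move=> w [hy hs]; have [hL|hL] := ltP (L * h y) (Xn1 w); [by left|right].
    split => //; rewrite /z.
    have : D1 * Xn1 w <= K * h y by rewrite /K -mulrA ler_wpM2l.
    lra.
  + exact: measurable_fun_gt measurable_Xn1.
  + exact: measurable_Xn1_Xnn_gt.
Qed.

Lemma spread_negligible_domvar (h : R -> R) : (\forall y \near +oo, 0 < Fbar y) ->
  (\forall y \near +oo, 0 <= h y <= y) ->
  (forall k, 0 < k -> exists2 C, 0 < C & \forall y \near +oo, Fbar (k * y) <= C * Fbar y) ->
  (exists2 C, 0 < C & \forall y \near +oo, h (2^-1 * y) <= C * h y) ->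
  cond_star P X h -> spread_negligible h.
Proof.
move=> Fpos h_le F_dv [C' C'0 hC'] cs D1 s D10 s0.
have cross := cross_tail_negligible Fpos cs.
pose k := 2^-1 / (D1 + 1).
have k0 : 0 < k by rewrite divr_gt0 ?invr_gt0 // ltr_wpDl.
have D1k : D1 * k <= 2^-1.
  rewrite mulrA ler_pdivrMr ?ltr_wpDl // mulrDr mulr1 [D1 * _]mulrC lerDl.
  by rewrite invr_ge0.
have i2 : 0 < (2 : R)^-1 by rewrite invr_gt0.
apply: (@negligible_add _ (fun y => pr P [set w | k * y < Xn1 w /\ k * y < Xnn w])
           (fun y => pr P [set w | s * h y < Xn1 w /\ 2^-1 * y < Xnn w])).
- have [C C0 FC] := F_dv k k0.
  apply: (@negligible_comp (fun y => cross_tail (1 * h y) y) _ ( *%R k) k C) => //.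
  + exact: cross.
  + exact: filterE.
  have h_le_k : \forall y \near +oo, 0 <= h (k * y) <= k * y.
    exact: (@near_comp_linear R _ ( *%R k) k k0 h_le (filterE _ (fun y => lexx (k * y)))).
  by apply: filterS h_le_k => y /andP[_ hz]; apply: pr_Xn1_Xnn_gt_le; rewrite mul1r.
- have [C C0 FC] := F_dv _ i2.
  apply: (@negligible_comp (fun y => cross_tail (s / C' * h y) y) _ ( *%R 2^-1) 2^-1 C) => //.
  + exact: cross _ (divr_gt0 s0 C'0).
  + exact: filterE.
  + apply: filterS hC' => y hz; apply: pr_Xn1_Xnn_gt_le.
    by rewrite -mulrA ler_wpM2l ?(ltW s0) // ler_pdivrMl.
- apply: filterS (nbhs_pinfty_gt (num_real 0)) => y y0.
  apply: le_trans (pr_setU_le P (measurable_Xn1_Xnn_gt _ _) (measurable_Xn1_Xnn_gt _ _)).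
  apply: le_pr; [exact: measurable_spread_event| |].
    exact: measurableU (measurable_Xn1_Xnn_gt _ _) (measurable_Xn1_Xnn_gt _ _).
  move=> w [hy hs]; have [hL|hL] := ltP (k * y) (Xn1 w).
    by left; split => //; apply: lt_le_trans hL (Xn1_le_Xnn w).
  right; split => //.
  have h1 : D1 * Xn1 w <= D1 * k * y by rewrite -mulrA ler_wpM2l.
  have : D1 * k * y <= 2^-1 * y by rewrite ler_wpM2r // ltW.
  lra.
Qed.

Lemma classL_Fbar_pos : classL Fbar -> \forall y \near +oo, 0 < Fbar y.
Proof.
move=> [Fpos _]; apply: filterS (nbhs_pinfty_gt (num_real 0)) => y y0.
exact/Fpos/ltW.
Qed.

Lemma HF_sublinear (h : R -> R) : HF Fbar h ->
  forall c, 0 < c -> \forall y \near +oo, h y <= c * y.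
Proof.
move=> [_ [h_o _]] c c0.
apply: filterS2 (nbhs_pinfty_gt (num_real 0)) (cvgr_near_bounds h_o c0) => y y0.
by move=> /andP[_]; rewrite add0r ler_pdivrMr.
Qed.

Lemma HF_h_le (h : R -> R) : HF Fbar h -> \forall y \near +oo, 0 <= h y <= y.
Proof.
move=> hf; have [h_pos _] := hf.
apply: filterS2 h_pos (HF_sublinear hf ltr01) => y h0.
by rewrite mul1r => ->; rewrite ltW.
Qed.

Lemma HF_tail_flat (h : R -> R) : classL Fbar -> HF Fbar h -> tail_flat h.
Proof.
move=> cl [_ [_ [hF _]]] e e0; exists 1 => //.
apply: filterS3 (classL_Fbar_pos cl) (cvgr_near_bounds (hF 1) e0)
  (cvgr_near_bounds (hF (-1)) e0) => y F0 /andP[lo _] /andP[_ up].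
rewrite mulN1r ler_pdivrMr // in up; rewrite ler_pdivlMr // in lo.
by rewrite !mul1r in lo *.
Qed.

Lemma HF_shift_bounds (h : R -> R) : classL Fbar -> HF Fbar h -> shift_bounds h.
Proof.
move=> cl [h_pos [_ [hF hh]]] K K0; split.
  exists 2 => //; have e1 : (0 : R) < 1 by [].
  apply: filterS2 (classL_Fbar_pos cl) (cvgr_near_bounds (hF (- K)) e1) => y F0.
  by move=> /andP[_]; rewrite mulNr ler_pdivrMr.
have [C hC] := hh (- K); exists (Num.max C 1); first by rewrite lt_max ltr01 orbT.
apply: filterS2 h_pos hC => y h0; rewrite mulNr ler_pdivrMr // => /le_trans; apply.
by rewrite ler_wpM2r ?(ltW h0) // le_max lexx.
Qed.

Section GMDA.
Variable h : R -> R.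
Hypothesis Fpos : forall x, 0 < Fbar x.
Hypothesis hpos : forall x, 0 < h x.
Hypothesis gm : GMDA_inf Fbar h.

Lemma GMDA_near_bounds y e : 0 < e -> \forall x \near +oo,
  (expR (- y) - e) * Fbar x <= Fbar (x + y * h x) <= (expR (- y) + e) * Fbar x.
Proof.
move=> e0; apply: filterS (cvgr_near_bounds (@gm y) e0) => x /andP[lo up].
by rewrite ler_pdivlMr ?Fpos // in lo; rewrite ler_pdivrMr ?Fpos // in up; rewrite lo up.
Qed.

(* Otherwise Fbar has a positive infimum L; GMDA halves Fbar over a step 2 h,
   which pushes it below L from any point where it is below 3 L / 2. *)
Lemma GMDA_Fbar_vanishes dl : 0 < dl -> \forall y \near +oo, Fbar y <= dl.
Proof.
move=> dl0; have [//|Fbar_far] := pselect (\forall y \near +oo, Fbar y <= dl).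
have dl_lt y : dl < Fbar y.
  rewrite ltNge; apply/negP => Fy; apply: Fbar_far.
  exists y; split; first by rewrite num_real.
  by move=> z yz; apply: le_trans (Fbar_le (ltW yz)) Fy.
have [Y [_ halve]] : \forall x \near +oo, Fbar (x + 2 * h x) <= 2^-1 * Fbar x.
  apply: filterS (GMDA_near_bounds 2 (_ : 0 < 6^-1)) => [x /andP[_ up]|].
    by apply: le_trans up _; rewrite ler_wpM2r ?Fbar_ge0 //; have := expRN2_le R; lra.
  by rewrite invr_gt0.
have inf_Fbar : has_inf (range Fbar).
  by split; [exists (Fbar 0), 0|exists 0 => _ [y _ <-]; exact: Fbar_ge0].
have L_ge : dl <= inf (range Fbar).
  by apply: lb_le_inf; [exists (Fbar 0), 0|move=> _ [y _ <-]; exact: ltW].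
have L2 : 0 < inf (range Fbar) / 2 by rewrite divr_gt0 // (lt_le_trans dl0).
have [_ [x1 _ <-] Fx1] := inf_adherent L2 inf_Fbar.
pose x2 := Num.max x1 (Y + 1).
have Fx2 : Fbar x2 <= Fbar x1 by apply: Fbar_le; rewrite le_max lexx.
have Yx2 : Y < x2 by rewrite lt_max ltrDl ltr01 orbT.
have := halve x2 Yx2.
have := ge_inf (proj2 inf_Fbar) (ex_intro2 _ _ (x2 + 2 * h x2) I erefl).
lra.
Qed.

(* If h y > c y then y - h y / c < 0, so Fbar (y - h y / c) >= Fbar 0, whereas
   GMDA bounds it by (expR c^-1 + 1) Fbar y, which tends to 0. *)
Lemma GMDA_sublinear c : 0 < c -> \forall y \near +oo, h y <= c * y.
Proof.
move=> c0; pose B := expR c^-1 + 1.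
have B0 : 0 < B by rewrite ltr_wpDl ?expR_ge0.
have dl0 : 0 < Fbar 0 / (2 * B) by rewrite divr_gt0 ?mulr_gt0.
apply: filterS3 (nbhs_pinfty_gt (num_real 0)) (GMDA_near_bounds (- c^-1) ltr01)
  (GMDA_Fbar_vanishes dl0) => y y0 /andP[_ up] small.
rewrite opprK in up; rewrite leNgt; apply/negP => hc.
have : y + - c^-1 * h y <= 0.
  rewrite mulNr subr_le0 -(ler_pM2l c0) mulrA divff ?gt_eqF // mul1r.
  exact: ltW.
move/Fbar_le => F0_le.
have : B * Fbar y <= B * (Fbar 0 / (2 * B)) by rewrite ler_wpM2l // ltW.
have -> : B * (Fbar 0 / (2 * B)) = Fbar 0 / 2 by field; rewrite gt_eqF.
have := Fpos 0; rewrite /B in up *; lra.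
Qed.

Lemma GMDA_tail_flat : tail_flat h.
Proof.
move=> e e0; pose t := Num.min e 1 / 4.
have t0 : 0 < t by rewrite divr_gt0 // lt_min e0 ltr01.
have t1 : t <= 4^-1 by rewrite -[leRHS]mul1r ler_pM2r ?invr_gt0 // ge_min lexx orbT.
have te : t <= e / 4 by rewrite ler_pM2r ?invr_gt0 // ge_min lexx.
exists t => //; have e2 : 0 < e / 2 by rewrite divr_gt0.
have expNt : 1 - t <= expR (- t) by have := expR_ge1Dx (- t); lra.
have expt : expR t <= 1 + 2 * t.
  have t_lt1 : 0 < 1 - t by lra.
  apply: (@le_trans _ _ (1 - t)^-1).
    by rewrite -[expR t]invrK -expRN lef_pV2 ?posrE ?expR_gt0.
  rewrite -[(1 - t)^-1]mul1r ler_pdivrMr //; nra.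
apply: filterS2 (GMDA_near_bounds (- t) e2) (GMDA_near_bounds t e2) => y.
rewrite opprK mulNr => /andP[_ up] /andP[lo _].
by split; [apply: le_trans up _|apply: le_trans lo]; rewrite ler_wpM2r ?Fbar_ge0 //; lra.
Qed.

(* With z = y - K h y, h z > (K + 3) h y would give z + h z > y + 3 h y, so up to
   small errors expR (-1) Fbar z <= Fbar (y + 3 h y) <= expR (-3) Fbar z. *)
Lemma GMDA_h_shift_le K : 0 <= K -> \forall y \near +oo, h (y - K * h y) <= (K + 3) * h y.
Proof.
move=> K0; pose r := expR (-1 : R); have r0 : 0 < r by apply: expR_gt0.
have r4 : 0 < r / 4 by rewrite divr_gt0.
have expN3 : expR (-3) <= r / 3.
  by rewrite (_ : -3 = -1 + -2 :> R) ?expRD ?ler_wpM2l ?expR_ge0 ?expRN2_le //; lra.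
have shift_far : \forall y \near +oo, (r - r / 4) * Fbar (y - K * h y) <=
    Fbar (y - K * h y + 1 * h (y - K * h y)).
  have i2 : 0 < (2 : R)^-1 by rewrite invr_gt0.
  apply: (@near_comp_linear R (fun z => (r - r / 4) * Fbar z <= Fbar (z + 1 * h z))
    (fun y => y - K * h y) _ i2 _ (sublinear_shift_ge_half K0 GMDA_sublinear)).
  by apply: filterS (GMDA_near_bounds 1 r4) => z /andP[].
apply: filterS2 shift_far (GMDA_near_bounds 3 r4) => y lo /andP[_ up].
rewrite leNgt; apply/negP => h_gt; set z := y - K * h y in lo h_gt.
have zy : z <= y by rewrite /z gerBl mulr_ge0 ?(ltW (hpos y)).
have yz3 : y + 3 * h y <= z + 1 * h z.
  by rewrite mul1r /z; apply: ltW; move: h_gt; rewrite mulrDl; lra.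
have : (r - r / 4) * Fbar z <= (expR (- 3) + r / 4) * Fbar z.
  apply: le_trans lo (le_trans (Fbar_le yz3) (le_trans up _)).
  by apply: ler_wpM2l; [rewrite addr_ge0 ?expR_ge0 // ltW|exact: Fbar_le].
rewrite ler_pM2r ?Fpos //; lra.
Qed.

Lemma GMDA_shift_bounds : shift_bounds h.
Proof.
move=> K K0; split; last first.
  by exists (K + 3); [rewrite ltr_wpDl|exact: GMDA_h_shift_le].
exists (expR K + 1); first by rewrite ltr_wpDl ?expR_ge0.
by apply: filterS (GMDA_near_bounds (- K) ltr01) => y; rewrite opprK mulNr => /andP[].
Qed.

Theorem tail_equiv_GMDA : cond_star P X h -> cond_star2 P X h ->
  weighted_ordstat_tail_equiv.
Proof.
move=> cs cs2.
have Fpos_near : \forall y \near +oo, 0 < Fbar y by apply: filterE.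
have h_le : \forall y \near +oo, 0 <= h y <= y.
  by apply: filterS (GMDA_sublinear ltr01) => y; rewrite mul1r (ltW (hpos y)).
apply: (tail_equiv_of_flat Fpos_near h_le GMDA_tail_flat cs).
exact: spread_negligible_star2 Fpos_near GMDA_sublinear GMDA_shift_bounds cs cs2.
Qed.

End GMDA.

Theorem tail_equiv_HF_star2 (h : R -> R) : classL Fbar -> HF Fbar h ->
  cond_star P X h -> cond_star2 P X h -> weighted_ordstat_tail_equiv.
Proof.
move=> cl hf cs cs2; have Fpos := classL_Fbar_pos cl.
apply: (tail_equiv_of_flat Fpos (HF_h_le hf) (HF_tail_flat cl hf) cs).
exact: spread_negligible_star2 Fpos (HF_sublinear hf) (HF_shift_bounds cl hf) cs cs2.
Qed.

Theorem tail_equiv_HF_domvar (h : R -> R) : classL Fbar -> classD Fbar -> domvar h ->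
  HF Fbar h -> cond_star P X h -> weighted_ordstat_tail_equiv.
Proof.
move=> cl F_dv h_dv hf cs; have Fpos := classL_Fbar_pos cl.
apply: (tail_equiv_of_flat Fpos (HF_h_le hf) (HF_tail_flat cl hf) cs).
apply: (spread_negligible_domvar Fpos (HF_h_le hf) _ _ cs).
  by move=> k; apply: domvar_le F_dv.
by apply: domvar_le h_dv _; rewrite invr_gt0.
Qed.

End WeightedOrderStatistics.

Unset Implicit Arguments.

Theorem corollary3p1 (d : measure_display) (T : measurableType d) (R : realType)
  (P : probability T R) (n : nat) (X : 'I_n -> T -> R) :
  (2 <= n)%N ->
  (forall i, measurable_fun setT (X i)) ->
  (forall i w, 0 <= X i w) ->
  (forall i, 0 < pr P [set w | 0 < X i w]) ->
  let Fb := tailF P (ordstat X n) in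
  ( (* (A) *)
    ((forall x, 0 < Fb x) /\
     exists h : R -> R, (forall x, 0 < h x) /\ GMDA_inf Fb h /\
       cond_star P X h /\ cond_star2 P X h)
  \/ (* (B) *)
    (classL Fb /\
     exists h : R -> R, HF Fb h /\ cond_star P X h /\ cond_star2 P X h)
  \/ (* (C) *)
    (classL Fb /\ classD Fb /\
     exists h : R -> R, domvar h /\ HF Fb h /\ cond_star P X h)) ->
  forall a b dd : R, 0 < a -> a <= b -> 0 <= dd ->
  forall eps : R, 0 < eps ->
  \forall x \near +oo, forall c : nat -> R,
    a <= c 0%N <= b -> (forall i, (0 < i < n)%N -> - dd <= c i <= dd) ->
    `| pr P [set w | x < \sum_(i < n) c i * ordstat X (n - i) w]
         / pr P [set w | x < c 0%N * ordstat X n w] - 1 | <= eps /\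
    `| pr P [set w | x < c 0%N * ordstat X n w]
         / (\sum_(i < n) pr P [set w | x < c 0%N * X i w]) - 1 | <= eps.
Proof.
move=> n2 mX X0 _ Fb.
case=> [[Fpos [h [hpos [gm [cs cs2]]]]]|[[cl [h [hf [cs cs2]]]]|[cl [F_dv [h [h_dv [hf cs]]]]]]].
- by apply: (tail_equiv_GMDA n2 mX X0 Fpos hpos gm cs cs2).
- by apply: (tail_equiv_HF_star2 n2 mX X0 cl hf cs cs2).
- by apply: (tail_equiv_HF_domvar n2 mX X0 cl F_dv h_dv hf cs).
Qed.
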